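(* Let $(A,B,R)$ be a formal context whose concept lattice $\mathcal C(A,B,R)$ has no infinite chains, and let $C_l\in\mathcal C(A,B,R)$ be a meet-irreducible concept. Let $(A^*,B,R^* )$ be the context produced by Construction M below. Then $(\mathcal C(A,B,R)\setminus\{C_l\},\le)\cong(\mathcal C(A^*,B,R^* ),\le^* )$. Construction M. Let $\mathcal S(C_l)=\{C\in\mathcal C(A,B,R)\mid C<C_l\}$ and $C_l^s=\bigvee\mathcal S(C_l)$ (the bottom if $\mathcal S(C_l)=\varnothing$). Put $A'=A\setminus\mathrm{Atg}(C_l)$. (1) If $C_l^s\neq C_l$: if there exists a meet-decomposition of $C_l^s$ not containing $C_l$, or $\mathrm{Atg}(C_l^s)\neq\varnothing$, then $A^*=A'$ and $R^*=R\cap(A^*\times B)$. Otherwise $A^*=A'\cup\{a^*\}$ for a new attribute $a^*\notin A$ and $R^*=(R\cap(A'\times B))\cup\{(a^*,b)\mid b\in\mathcal E(C_l^s)\}$. (2) If $C_l^s=C_l$: let $\{C_l^{s_i}\mid i\in\Gamma\}$ be the maximal elements of $\mathcal S(C_l)$ and $\Gamma'=\{i\in\Gamma\mid$ every meet-decomposition of $C_l^{s_i}$ contains $C_l$, and $\mathrm{Atg}(C_l^{s_i})=\varnothing\}$. If $\Gamma'=\varnothing$, then $A^*=A'$ and $R^*=R\cap(A^*\times B)$. Otherwise $A^*=A'\cup\{a_i^*\mid i\in\Gamma'\}$ with pairwise distinct new attributes and $R^*=(R\cap(A'\times B))\cup\{(a_i^*,b)\mid i\in\Gamma',\ b\in\mathcal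 E(C_l^{s_i})\}$.
   Context: Formal context $(A,B,R)$, $R\subseteq A\times B$; $X^{\uparrow}=\{a\in A\mid (a,x)\in R\ \forall x\in X\}$, $Y^{\downarrow}=\{x\in B\mid (a,x)\in R\ \forall a\in Y\}$; concepts are pairs $(X,Y)$ with $X^\uparrow=Y$, $Y^\downarrow=X$, ordered by inclusion of extents; $\mathcal E(C)$ denotes the extent of concept $C$. $\mathrm{Atg}(C)=\{a\in A\mid (\{a\}^{\downarrow},\{a\}^{\downarrow\uparrow})=C\}$ (attributes generating $C$). A concept is meet-irreducible if it is not the top and is not the meet of two concepts both different from it. A meet-decomposition of a concept $C$ is a set $\psi$ of concepts with $C\notin\psi$ and $\bigwedge\psi=C$. $\le^*$ is the extent-inclusion order on $\mathcal C(A^*,B,R^* )$. *)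

From Stdlib Require Import List.
Set Implicit Arguments.

Section FCA.
Variables (A B : Type) (R : A -> B -> Prop).

(* X^up for X ⊆ B, Y^down for Y ⊆ A (the paper's convention: extents ⊆ B). *)
Definition up (X : B -> Prop) : A -> Prop := fun a => forall x, X x -> R a x.
Definition down (Y : A -> Prop) : B -> Prop := fun x => forall a, Y a -> R a x.

Record concept := Concept {
  ext : B -> Prop;
  int : A -> Prop;
  int_up : forall a, int a <-> up ext a;
  ext_down : forall x, ext x <-> down int x }.

Definition cle (C D : concept) : Prop := forall x, ext C x -> ext D x.
Definition clt (C D : concept) : Prop := cle C D /\ C <> D.

Definition is_lub (S : concept -> Prop) (C : concept) : Prop :=
  (forall D, S D -> cle D C) /\ (forall E, (forall D, S D -> cle D E) -> cle C E).
Definition is_glb (S : concept -> Prop) (C : concept) : Prop :=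
  (forall D, S D -> cle C D) /\ (forall E, (forall D, S D -> cle E D) -> cle E C).

Definition is_top (C : concept) : Prop := forall D, cle D C.

Definition meet_irreducible (C : concept) : Prop :=
  ~ is_top C /\
  forall C1 C2, is_glb (fun D => D = C1 \/ D = C2) C -> C1 = C \/ C2 = C.

Definition meet_decomposition (psi : concept -> Prop) (C : concept) : Prop :=
  ~ psi C /\ is_glb psi C.

Definition Atg (C : concept) (a : A) : Prop :=
  (forall x, ext C x <-> down (fun a' => a' = a) x) /\
  (forall a', int C a' <-> up (down (fun a'' => a'' = a)) a').

Definition finite_set (S : concept -> Prop) : Prop :=
  exists l : list concept, forall C, S C -> In C l.
Definition is_chain (S : concept -> Prop) : Prop :=
  forall C D, S C -> S D -> cle C D \/ cle D C.
Definition no_infinite_chains : Prop :=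
  forall S, is_chain S -> finite_set S.

Definition strictly_below (Cl : concept) : concept -> Prop := fun C => clt C Cl.

Definition maximal_below (Cl D : concept) : Prop :=
  strictly_below Cl D /\ forall E, strictly_below Cl E -> cle D E -> E = D.

Definition needs_new (Cl D : concept) : Prop :=
  (forall psi, meet_decomposition psi D -> psi Cl) /\ (forall a, ~ Atg D a).

(* Construction M.  Cls is C_l^s = \/ S(C_l).  New attributes are indexed by
   concepts: in case (1) the single index C_l^s, in case (2) the indices in Γ'
   (maximal elements of S(C_l)). *)
Definition new_index (Cl Cls D : concept) : Prop :=
  (Cls <> Cl /\ D = Cls /\ needs_new Cl D) \/
  (Cls = Cl /\ maximal_below Cl D /\ needs_new Cl D).

Definition in_Astar (Cl Cls : concept) (z : A + concept) : Prop :=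
  match z with
  | inl a => ~ Atg Cl a
  | inr D => new_index Cl Cls D
  end.

Definition Astar (Cl Cls : concept) : Type := { z : A + concept | in_Astar Cl Cls z }.

Definition Rstar (Cl Cls : concept) (z : Astar Cl Cls) (x : B) : Prop :=
  match proj1_sig z with
  | inl a => R a x
  | inr D => ext D x
  end.

End FCA.

(* The map sends a concept C <> C_l to the concept of the new context with the same
   extent, so the whole proof is about extents. Every R*-column is an extent of (A,B,R) (an old column
   or the extent of C_l^s, resp. of some C_l^{s_i}), so every R*-extent is an R-extent; it is
   not the extent of C_l, for then C_l would be the meet of concepts strictly above it, which
   a meet-irreducible concept in a lattice without infinite chains cannot be. Conversely an
   extent of C <> C_l is an intersection of surviving columns: if C is not below C_l no
   attribute of C generates C_l; if C < C_l, the columns generating C_l can be replaced by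
   the extent of the cover K of C (C_l^s or a maximal element of S(C_l)), and the extent of
   K is itself an R*-extent, through a meet-decomposition avoiding C_l, a generating
   attribute, or the new attribute added for K. *)

From Stdlib Require Import ssrfun.
From Stdlib Require Import Classical ClassicalEpsilon FunctionalExtensionality
  PropExtensionality ProofIrrelevance List FinFun PeanoNat Lia.

Set Implicit Arguments.

Section ConceptLattice.
Variables (A B : Type) (R : A -> B -> Prop).

Lemma concept_ext (C D : concept R) : (forall x, ext C x <-> ext D x) -> C = D.
Proof.
  destruct C as [X Y upY downX], D as [X' Y' upY' downX']; simpl; intro HX.
  assert (X = X') as <-.
  { apply functional_extensionality; intro x; apply propositional_extensionality; auto. }
  assert (Y = Y') as <-.
  { apply functional_extensionality; intro a; apply propositional_extensionality.
    rewrite upY, upY'; tauto. }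
  f_equal; apply proof_irrelevance.
Qed.

Lemma cle_refl (C : concept R) : cle C C.
Proof. intros x Hx; exact Hx. Qed.

Lemma cle_trans (C D E : concept R) : cle C D -> cle D E -> cle C E.
Proof. unfold cle; auto. Qed.

Lemma cle_antisym (C D : concept R) : cle C D -> cle D C -> C = D.
Proof. intros HCD HDC; apply concept_ext; split; auto. Qed.

Definition closed_concept (X : B -> Prop)
  (HX : forall x, down R (up R X) x -> X x) : concept R.
Proof.
  refine (@Concept A B R X (up R X) (fun a => conj (fun h => h) (fun h => h)) _).
  intro x; split; [intros Hx a Ha; apply Ha, Hx | apply HX].
Defined.

Lemma meet_closed (S : concept R -> Prop) x :
  down R (up R (fun y => forall C, S C -> ext C y)) x -> forall C, S C -> ext C x.
Proof.
  intros Hx C SC; apply (ext_down C); intros a Ha; apply Hx.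
  intros y Hy; apply (ext_down C) in Hy; [apply Hy, Ha | apply SC].
Qed.

Definition meet (S : concept R -> Prop) : concept R := closed_concept (@meet_closed S).

Lemma meet_glb (S : concept R -> Prop) : is_glb S (meet S).
Proof. split; [intros D SD x Hx; exact (Hx D SD) | intros E HE x Hx D SD; exact (HE D SD x Hx)]. Qed.

Lemma glb_meet (S : concept R -> Prop) (C : concept R) : is_glb S C -> C = meet S.
Proof.
  intros [lbC glbC]; destruct (meet_glb S) as [lbM glbM].
  apply cle_antisym; [apply glbM | apply glbC]; assumption.
Qed.

Lemma down_single (a : A) x : down R (fun a' => a' = a) x <-> R a x.
Proof. split; intro H; [apply H; reflexivity | intros a' ->; exact H]. Qed.

Lemma attr_closed (a : A) x : down R (up R (R a)) x -> R a x.
Proof. intro Hx; apply Hx; intros y Hy; exact Hy. Qed.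

Definition attr_concept (a : A) : concept R := closed_concept (@attr_closed a).

Lemma Atg_attr_concept (C : concept R) (a : A) : Atg C a <-> attr_concept a = C.
Proof.
  split.
  - intros [HX _]; apply concept_ext; intro x; simpl; rewrite HX, down_single; tauto.
  - intros <-; split; simpl.
    + intro x; rewrite down_single; tauto.
    + intro a'; split; intros H y Hy; apply H; apply down_single; exact Hy.
Qed.

Lemma Atg_cle (C D : concept R) (a : A) : Atg D a -> int C a -> cle C D.
Proof.
  intros HA Ha x Hx; apply Atg_attr_concept in HA; rewrite <- HA.
  apply (ext_down C) in Hx; exact (Hx a Ha).
Qed.

End ConceptLattice.

Lemma not_injective_in_list (T : Type) (t : nat -> T) (l : list T) :
  Injective t -> ~ (forall n, In (t n) l).
Proof.
  intros Ht Hl.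
  assert (Hincl : incl (map t (seq 0 (S (length l)))) l).
  { intros x Hx; apply in_map_iff in Hx as [n [<- _]]; apply Hl. }
  apply NoDup_incl_length in Hincl.
  - rewrite length_map, length_seq in Hincl; lia.
  - apply Injective_map_NoDup; [exact Ht | apply seq_NoDup].
Qed.

Section StrictDescent.
Variables (T : Type) (r : T -> T -> Prop) (t : nat -> T).
Hypothesis r_trans : forall x y z, r x y -> r y z -> r x z.
Hypothesis r_antisym : forall x y, r x y -> r y x -> x = y.
Hypothesis t_step : forall n, r (t (S n)) (t n) /\ t (S n) <> t n.

Lemma descent_lt n m : n < m -> r (t m) (t n).
Proof.
  induction 1 as [|m _ IH]; [apply t_step | exact (r_trans (proj1 (t_step m)) IH)].
Qed.

Lemma descent_neq n m : n < m -> t m <> t n.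
Proof.
  intros Hnm Heq; apply (proj2 (t_step n)).
  destruct (Nat.eq_dec m (S n)) as [<-|Hm]; [exact Heq|].
  apply r_antisym; [apply t_step|].
  rewrite <- Heq; apply descent_lt; lia.
Qed.

Lemma descent_injective : Injective t.
Proof.
  intros n m Heq; destruct (Nat.lt_total n m) as [Hnm|[->|Hmn]]; trivial; exfalso.
  - exact (descent_neq Hnm (eq_sym Heq)).
  - exact (descent_neq Hmn Heq).
Qed.

End StrictDescent.

(* [r] is [cle] or its converse, so that minimal and maximal elements are both instances. *)
Section Extremal.
Variables (A B : Type) (R : A -> B -> Prop) (r : concept R -> concept R -> Prop).
Hypothesis Hchains : no_infinite_chains R.
Hypothesis r_cle : forall C D, r C D -> cle C D \/ cle D C.
Hypothesis r_trans : forall C D E, r C D -> r D E -> r C E.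
Hypothesis r_antisym : forall C D, r C D -> r D C -> C = D.

Lemma no_strict_descent (t : nat -> concept R) :
  ~ (forall n, r (t (S n)) (t n) /\ t (S n) <> t n).
Proof.
  intro t_step.
  assert (Hchain : is_chain (fun C => exists n, C = t n)).
  { intros C D [n ->] [m ->].
    destruct (Nat.lt_total n m) as [Hnm|[->|Hmn]].
    - destruct (r_cle (descent_lt r t r_trans t_step Hnm)); tauto.
    - left; apply cle_refl.
    - apply r_cle, (descent_lt r t r_trans t_step Hmn). }
  destruct (Hchains Hchain) as [l Hl].
  apply (not_injective_in_list l (descent_injective r t r_trans r_antisym t_step)).
  intro n; apply Hl; exists n; reflexivity.
Qed.

Lemma exists_extremal (P : concept R -> Prop) (C0 : concept R) :
  P C0 -> exists M, P M /\ forall C, P C -> r C M -> C = M.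
Proof.
  intro PC0; apply NNPP; intro Hnone.
  assert (step : forall M : {M | P M},
             {C : {C | P C} | r (proj1_sig C) (proj1_sig M) /\ proj1_sig C <> proj1_sig M}).
  { intros [M PM]; apply constructive_indefinite_description.
    apply NNPP; intro Hmin; apply Hnone; exists M; split; [exact PM|].
    intros C PC rCM; apply NNPP; intro neq; apply Hmin.
    exists (exist _ C PC); auto. }
  pose (s := fix s (n : nat) : {M | P M} :=
          match n with 0 => exist _ C0 PC0 | S n => proj1_sig (step (s n)) end).
  apply (no_strict_descent (fun n => proj1_sig (s n))).
  intro n; exact (proj2_sig (step (s n))).
Qed.

End Extremal.

Lemma exists_minimal (A B : Type) (R : A -> B -> Prop) (P : concept R -> Prop) C0 :
  no_infinite_chains R -> P C0 -> exists M, P M /\ forall C, P C -> cle C M -> C = M.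
Proof.
  intro Hchains; apply exists_extremal; eauto using cle_trans, cle_antisym.
Qed.

Lemma exists_maximal (A B : Type) (R : A -> B -> Prop) (P : concept R -> Prop) C0 :
  no_infinite_chains R -> P C0 -> exists M, P M /\ forall C, P C -> cle M C -> C = M.
Proof.
  intro Hchains; apply exists_extremal with (r := fun C D => cle D C);
    eauto using cle_trans, cle_antisym.
Qed.

Section MeetIrreducible.
Variables (A B : Type) (R : A -> B -> Prop) (Cl : concept R).
Hypothesis Hchains : no_infinite_chains R.
Hypothesis Hirr : meet_irreducible Cl.

Definition meet_list (l : list (concept R)) : concept R := meet (fun C => In C l).

Lemma meet_list_cons_glb (C : concept R) l :
  is_glb (fun D => D = C \/ D = meet_list l) (meet_list (C :: l)).
Proof.
  split.
  - intros D [-> | ->] x Hx; [apply Hx; left; reflexivity|].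
    intros E HE; apply Hx; right; exact HE.
  - intros E HE x Hx D [<- | HD]; [exact (HE C (or_introl eq_refl) x Hx)|].
    exact (HE (meet_list l) (or_intror eq_refl) x Hx D HD).
Qed.

Lemma meet_list_neq (T : concept R -> Prop) (HT : forall C, T C -> clt Cl C) l :
  (forall C, In C l -> T C) -> meet_list l <> Cl.
Proof.
  induction l as [|C l IH]; intros Hl Heq.
  - apply (proj1 Hirr); intros D x _; rewrite <- Heq; intros E [].
  - destruct (proj2 Hirr C (meet_list l)) as [HC|Hl'].
    + rewrite <- Heq; apply meet_list_cons_glb.
    + exact (proj2 (HT C (Hl C (or_introl eq_refl))) (eq_sym HC)).
    + exact (IH (fun D HD => Hl D (or_intror HD)) Hl').
Qed.

(* Finite meets of members of [T] differ from [Cl] by irreducibility; a minimal one lies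
   below all of [T], hence equals [meet T]. *)
Lemma meet_irreducible_meet_neq (T : concept R -> Prop) :
  (forall C, T C -> clt Cl C) -> meet T <> Cl.
Proof.
  intros HT Heq.
  destruct (exists_minimal (fun M => exists l, (forall C, In C l -> T C) /\ M = meet_list l)
              (meet_list nil) Hchains) as [M [[l [Hl ->]] Hmin]].
  { exists nil; split; [intros C []|reflexivity]. }
  apply (meet_list_neq T HT Hl), cle_antisym.
  - rewrite <- Heq; intros x Hx C TC.
    assert (HCl : meet_list (C :: l) = meet_list l).
    { apply Hmin; [exists (C :: l); split; [intros D [<-|HD]; auto|reflexivity]|].
      intros y Hy D HD; apply Hy; right; exact HD. }
    rewrite <- HCl in Hx; apply Hx; left; reflexivity.
  - intros x Hx C HC; exact (proj1 (HT C (Hl C HC)) x Hx).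
Qed.

End MeetIrreducible.

Section ConstructionM.
Variables (A B : Type) (R : A -> B -> Prop) (Cl Cls : concept R).
Hypothesis Hchains : no_infinite_chains R.
Hypothesis Hirr : meet_irreducible Cl.
Hypothesis HCls : is_lub (strictly_below Cl) Cls.

Notation Rs := (@Rstar A B R Cl Cls).

Definition star_closed (X : B -> Prop) : Prop := forall x, down Rs (up Rs X) x -> X x.

Lemma star_closed_iff (X Y : B -> Prop) :
  (forall x, X x <-> Y x) -> star_closed X -> star_closed Y.
Proof.
  intros HXY HX x Hx; apply HXY, HX; intros z Hz; apply Hx.
  intros y Hy; apply Hz, HXY, Hy.
Qed.

Lemma star_closed_meet (I : Type) (P : I -> Prop) (F : I -> B -> Prop) :
  (forall i, P i -> star_closed (F i)) -> star_closed (fun x => forall i, P i -> F i x).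
Proof.
  intros HF x Hx i Pi; apply HF; [exact Pi|].
  intros z Hz; apply Hx; intros y Hy; apply Hz, Hy, Pi.
Qed.

Lemma star_closed_and (X Y : B -> Prop) :
  star_closed X -> star_closed Y -> star_closed (fun x => X x /\ Y x).
Proof.
  intros HX HY x Hx; split; [apply HX | apply HY];
    intros z Hz; apply Hx; intros y [HXy HYy]; apply Hz; assumption.
Qed.

Lemma star_closed_column (z : Astar Cl Cls) : star_closed (Rs z).
Proof. intros x Hx; exact (Hx z (fun y Hy => Hy)). Qed.

Lemma star_closed_attrs (Y : A -> Prop) :
  (forall a, Y a -> ~ Atg Cl a) -> star_closed (fun x => forall a, Y a -> R a x).
Proof.
  intro HY; apply star_closed_meet; intros a Ya.
  exact (@star_closed_column (exist _ (inl a) (HY a Ya))).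
Qed.

Lemma star_closed_not_below (C : concept R) : ~ cle C Cl -> star_closed (ext C).
Proof.
  intro HC; apply star_closed_iff with (fun x => forall a, int C a -> R a x).
  - intro x; rewrite (ext_down C); reflexivity.
  - apply star_closed_attrs; intros a Ha HA; exact (HC (Atg_cle C HA Ha)).
Qed.

Lemma star_closed_cover (K : concept R) :
  K <> Cl -> (needs_new Cl K -> new_index Cl Cls K) ->
  (forall D, clt D Cl -> cle K D -> D = K) -> star_closed (ext K).
Proof.
  intros HK Hnew Hmax.
  destruct (classic (needs_new Cl K)) as [Hn|Hn].
  { exact (@star_closed_column (exist _ (inr K) (Hnew Hn))). }
  apply not_and_or in Hn as [Hdec|Hatg].
  - apply not_all_ex_not in Hdec as [psi Hpsi].
    apply imply_to_and in Hpsi as [[psiK glbK] psiCl].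
    rewrite (glb_meet glbK); apply star_closed_meet; intros D HD.
    apply star_closed_not_below; intro HDCl.
    assert (HDneq : D <> Cl) by (intros ->; exact (psiCl HD)).
    apply psiK; rewrite <- (Hmax D (conj HDCl HDneq) (proj1 glbK D HD)); exact HD.
  - apply not_all_not_ex in Hatg as [a HA].
    apply Atg_attr_concept in HA; rewrite <- HA.
    refine (@star_closed_column (exist _ (inl a) _)).
    intro HACl; apply Atg_attr_concept in HACl; apply HK; congruence.
Qed.

(* [K] is [C_l^s] in case (1) and a maximal element of [S(C_l)] above [C] in case (2). *)
Lemma exists_cover (C : concept R) :
  clt C Cl -> exists K, cle C K /\ clt K Cl /\ (needs_new Cl K -> new_index Cl Cls K) /\
                        (forall D, clt D Cl -> cle K D -> D = K).
Proof.
  intro HC; destruct (classic (Cls = Cl)) as [HClsCl|HClsCl].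
  - destruct (exists_maximal (fun M => clt M Cl /\ cle C M) C Hchains (conj HC (cle_refl C)))
      as [K [[HK HCK] Hmax]].
    assert (HKmax : maximal_below Cl K).
    { split; [exact HK|]; intros E HE HKE.
      exact (Hmax E (conj HE (cle_trans HCK HKE)) HKE). }
    exists K; repeat split; try apply HK; [exact HCK| |apply HKmax].
    intro Hn; right; auto.
  - destruct HCls as [ub lub].
    assert (HClsle : cle Cls Cl) by (apply lub; intros D HD; apply HD).
    exists Cls; repeat split; [apply ub, HC|exact HClsle|exact HClsCl| |].
    + intro Hn; left; auto.
    + intros D HD HClsD; apply cle_antisym; [apply ub, HD | exact HClsD].
Qed.

Lemma star_closed_ext (C : concept R) : C <> Cl -> star_closed (ext C).
Proof.
  intro HC; destruct (classic (cle C Cl)) as [HCCl|HCCl]; [|exact (star_closed_not_below HCCl)].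
  destruct (exists_cover (conj HCCl HC)) as [K [HCK [[HKCl HK] [Hnew Hmax]]]].
  apply star_closed_iff with (fun x => (forall a, int C a /\ ~ Atg Cl a -> R a x) /\ ext K x).
  - intro x; rewrite (ext_down C); split.
    + intros [HR HKx] a Ha; destruct (classic (Atg Cl a)) as [HA|HA]; [|exact (HR a (conj Ha HA))].
      apply Atg_attr_concept in HA; rewrite <- HA in HKCl; exact (HKCl x HKx).
    + intro Hx; split; [intros a [Ha _]; exact (Hx a Ha)|].
      apply HCK, (ext_down C); exact Hx.
  - apply star_closed_and; [apply star_closed_attrs; intros a [_ HA]; exact HA|].
    exact (star_closed_cover HK Hnew Hmax).
Qed.

Definition column_concept (z : A + concept R) : concept R :=
  match z with inl a => attr_concept R a | inr D => D end.

Lemma Rstar_column (z : Astar Cl Cls) x : Rs z x <-> ext (column_concept (proj1_sig z)) x.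
Proof. destruct z as [[a|D] h]; reflexivity. Qed.

Lemma column_concept_neq (z : A + concept R) : in_Astar Cl Cls z -> column_concept z <> Cl.
Proof.
  destruct z as [a|D]; simpl.
  - intros HA HaCl; apply HA, Atg_attr_concept, HaCl.
  - intros [[HClsCl [-> _]] | [_ [[[_ HD] _] _]]]; assumption.
Qed.

Definition star_columns (N : concept Rs) (C : concept R) : Prop :=
  exists z, int N z /\ C = column_concept (proj1_sig z).

Definition concept_of_star (N : concept Rs) : concept R := meet (star_columns N).

Lemma concept_of_star_ext (N : concept Rs) x : ext (concept_of_star N) x <-> ext N x.
Proof.
  simpl; rewrite (ext_down N); split.
  - intros Hx z Hz; apply Rstar_column, Hx; exists z; split; [exact Hz|reflexivity].
  - intros Hx C [z [Hz ->]]; apply Rstar_column, Hx, Hz.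
Qed.

Lemma concept_of_star_neq (N : concept Rs) : concept_of_star N <> Cl.
Proof.
  intro Heq; apply (@meet_irreducible_meet_neq _ _ _ Cl Hchains Hirr (star_columns N)); [|exact Heq].
  intros C [z [Hz ->]]; split.
  - intros x Hx; rewrite <- Heq in Hx; exact (Hx _ (ex_intro _ z (conj Hz eq_refl))).
  - intro E; exact (column_concept_neq _ (proj2_sig z) (eq_sym E)).
Qed.

Definition concept_to_star (C : {C : concept R | C <> Cl}) : concept Rs :=
  closed_concept (star_closed_ext (proj2_sig C)).

Definition concept_from_star (N : concept Rs) : {C : concept R | C <> Cl} :=
  exist (fun C => C <> Cl) (concept_of_star N) (concept_of_star_neq (N := N)).

End ConstructionM.

Theorem mainTheorem9 (A B : Type) (R : A -> B -> Prop) (Cl Cls : concept R)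
  (Hchains : no_infinite_chains R)
  (Hirr : meet_irreducible Cl)
  (HCls : is_lub (strictly_below Cl) Cls) :
  exists f : { C : concept R | C <> Cl } -> concept (@Rstar A B R Cl Cls),
    bijective f /\
    (forall C D : { C : concept R | C <> Cl },
        cle (proj1_sig C) (proj1_sig D) <-> cle (f C) (f D)).
Proof.
  exists (concept_to_star Hchains HCls); split.
  - exists (concept_from_star Hchains Hirr).
    + intros [C HC]; apply subset_eq_compat, concept_ext; intro x.
      exact (concept_of_star_ext _ x).
    + intro N; apply concept_ext; intro x; exact (concept_of_star_ext N x).
  - intros C D; reflexivity.
Qed.
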